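(* Let $\Gamma_\mu:\mathbb{R}^N_+\to\mathbb{R}^N_+$ be monotone, let $\kappa_0>0$, $\kappa_\Gamma>\kappa_h>0$, $\delta>0$, let $\phi$ be as in the context, and let $c\in\mathbb{R}^N_+$ with $\|c\|<\kappa_\Gamma/2$. Let $\tau=\langle y^1,\dots,y^{N+1}\rangle$ be an $N$-simplex of the triangulation $\tilde K_1(\delta)$ with vertices $y^j=(v^j,t_j)\in\mathbb{R}^N_+\times\{0,1\}$ such that $\|v^j\|>\kappa_\Gamma+\kappa_0+\delta$ for all $j=1,\dots,N+1$. Then $\tau$ is not complete (with respect to the labeling $l$ defined below).
   Context: Order on $\mathbb{R}^N$: $v\ge w$ iff $v_i\ge w_i$ for all $i$; $v>w$ iff $v\ge w$, $v\ne w$; $v\gg w$ iff $v_i>w_i$ for all $i$. $\|\cdot\|$ is the Euclidean norm, $e=(1,\dots,1)^\top$. Given $\kappa_0>0$, $\kappa_\Gamma>\kappa_h>0$, define $\phi:\mathbb{R}^N_+\to\mathbb{R}^N$ by $\phi(v)=\Gamma_\mu(v)\big(1+\min\{0,\frac{\kappa_\Gamma-2\|v\|}{\|v\|+\kappa_0}\}\big)+\max\{0,\kappa_h-2\|v\|\}e$. Triangulation $\tilde K_1(\delta)$: let $P=\mathrm{diag}(\delta,\dots,\delta,1)\in\mathbb{R}^{(N+1)\times(N+1)}$; its $(N+1)$-simplices are $\langle y^1,\dots,y^{N+2}\rangle$ where $y^1=(\delta z,0)$ with $z\in\mathbb{Z}^N$, and $y^{i+1}=y^i+Pe_{\pi(i)}$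 for $i=1,\dots,N+1$, $\pi$ a permutation of $\{1,\dots,N+1\}$ ($e_k$ the $k$-th unit vector of $\mathbb{R}^{N+1}$); in particular $y^{N+2}=y^1+(\delta,\dots,\delta,1)^\top$, all vertices lie in $\mathbb{R}^N\times\{0,1\}$, and $y^1<y^2<\dots<y^{N+2}$. Its $N$-simplices are the facets of these $(N+1)$-simplices, with vertices listed in increasing order. Homotopy: $\vartheta(v,t)=(1-t)c+t\phi(v)$; labeling: $l(v,t)=\vartheta(v,t)-v$ for vertices $(v,t)\in\mathbb{R}^N_+\times\{0,1\}$. Labeling matrix of $\tau=\langle y^1,\dots,y^{N+1}\rangle$: the $(N+1)\times(N+1)$ matrix $L(\tau)$ with $j$-th column $(1,l(y^j)^\top)^\top$. A matrix $W$ is lexicographically positive ($W\succ0$) if the first nonzero entry of each row is positive. $\tau$ is complete if there is $W$ with $L(\tau)W=I_{N+1}$ and $W\succ0$. *)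

(* the statement is algebraic/order-theoretic, stated over an
   arbitrary real closed field R (which includes the reals). *)
From HB Require Import structures.
From mathcomp Require Import all_boot all_order all_algebra all_fingroup.
Set Implicit Arguments. Unset Strict Implicit. Unset Printing Implicit Defensive.
Import Order.TTheory GRing.Theory Num.Theory.
Local Open Scope ring_scope.

Section Defs.
Variable R : rcfType.

Definition vge (N : nat) (v w : 'cV[R]_N) : Prop := forall i, w i 0 <= v i 0.
Definition nonneg (N : nat) (v : 'cV[R]_N) : Prop := forall i, 0 <= v i 0.

Definition enorm (N : nat) (v : 'cV[R]_N) : R := Num.sqrt (\sum_i v i 0 ^+ 2).

Definition evec (N : nat) : 'cV[R]_N := const_mx 1.

(* Gamma_mu : R^N_+ -> R^N_+ monotone (represented as a total map on R^N,
   constrained only on R^N_+). *)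
Definition monotone_on_nonneg (N : nat) (G : 'cV[R]_N -> 'cV[R]_N) : Prop :=
  (forall v, nonneg v -> nonneg (G v)) /\
  (forall v w, nonneg v -> nonneg w -> vge v w -> vge (G v) (G w)).

Definition phi (N : nat) (G : 'cV[R]_N -> 'cV[R]_N) (k0 kG kh : R)
  (v : 'cV[R]_N) : 'cV[R]_N :=
  (1 + Num.min 0 ((kG - 2 * enorm v) / (enorm v + k0))) *: G v
  + Num.max 0 (kh - 2 * enorm v) *: evec N.

Definition vartheta (N : nat) (G : 'cV[R]_N -> 'cV[R]_N) (k0 kG kh : R)
  (c : 'cV[R]_N) (v : 'cV[R]_N) (t : R) : 'cV[R]_N :=
  (1 - t) *: c + t *: phi G k0 kG kh v.

Definition label (N : nat) (G : 'cV[R]_N -> 'cV[R]_N) (k0 kG kh : R)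
  (c : 'cV[R]_N) (v : 'cV[R]_N) (t : R) : 'cV[R]_N :=
  vartheta G k0 kG kh c v t - v.

Definition spat (N : nat) (y : 'cV[R]_N.+1) : 'cV[R]_N :=
  \col_(j < N) y (widen_ord (leqnSn N) j) 0.
Definition tim (N : nat) (y : 'cV[R]_N.+1) : R := y ord_max 0.

Definition Pmat (N : nat) (delta : R) : 'M[R]_N.+1 :=
  diag_mx (\row_(i < N.+1) if i == ord_max then 1 else delta).

Definition unitv (N : nat) (k : 'I_N.+1) : 'cV[R]_N.+1 := delta_mx k 0.

(* Vertex i (0-indexed, i = 0..N+1) of the (N+1)-simplex of K~1(delta)
   determined by z in Z^N and the permutation pi:
   y^1 = (delta z, 0), y^{i+1} = y^i + P e_{pi(i)}. *)
Definition kvert (N : nat) (delta : R) (z : 'I_N -> int) (pi : 'S_N.+1)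
  (i : 'I_N.+2) : 'cV[R]_N.+1 :=
  \col_(j < N.+1) (if unlift ord_max j is Some j' then delta * (z j')%:~R else 0)
  + \sum_(k < N.+1 | (k < i)%N) Pmat N delta *m unitv (pi k).

(* The N-simplex obtained by deleting vertex r; vertices listed in
   increasing order (j |-> lift r j is increasing). *)
Definition fvert (N : nat) (delta : R) (z : 'I_N -> int) (pi : 'S_N.+1)
  (r : 'I_N.+2) (j : 'I_N.+1) : 'cV[R]_N.+1 :=
  kvert delta z pi (lift r j).

Definition labmat (N : nat) (G : 'cV[R]_N -> 'cV[R]_N) (k0 kG kh : R)
  (c : 'cV[R]_N) (y : 'I_N.+1 -> 'cV[R]_N.+1) : 'M[R]_N.+1 :=
  \matrix_(i < N.+1, j < N.+1)
     (col_mx (1%:M : 'M[R]_1) (label G k0 kG kh c (spat (y j)) (tim (y j)))) i 0.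

Definition lexpos (m n : nat) (W : 'M[R]_(m, n)) : Prop :=
  forall i, exists j, 0 < W i j /\ (forall k : 'I_n, (k < j)%N -> W i k = 0).

Definition complete (N : nat) (G : 'cV[R]_N -> 'cV[R]_N) (k0 kG kh : R)
  (c : 'cV[R]_N) (y : 'I_N.+1 -> 'cV[R]_N.+1) : Prop :=
  exists W : 'M[R]_N.+1, labmat G k0 kG kh c y *m W = 1%:M /\ lexpos W.

End Defs.

From mathcomp Require Import all_boot all_order all_algebra all_fingroup.
From mathcomp Require Import lra.
Set Implicit Arguments. Unset Strict Implicit.
Import Order.TTheory GRing.Theory Num.Theory.
Local Open Scope ring_scope.

(* Suppose the facet tau = <y^1, ..., y^(N+1)> were complete, with
   L(tau) W = I and W lexicographically positive.  The first column w of W is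
   then a convex combination (w >= 0, sum w = 1) with sum_j w_j l(y^j) = 0.
   We exhibit a vector a with  a . l(y^j) < 0  for every vertex, which makes
   such a combination impossible.  Take a = v^1, the spatial part of the first
   vertex:
   - vertices of K~1(delta) increase along a simplex, so a <= v^j and 0 <= t_j <= 1;
   - far from the origin (|v| >= kG + k0) the map phi takes nonpositive values,
     hence l(v, t) <= c - v componentwise for t in [0, 1];
   - so a . l(y^j) <= a . c - a . a, and a . c < a . a because 2|c| < kG < |a|. *)

Section Triangulation.
Variables (R : rcfType) (N : nat) (delta : R) (z : 'I_N -> int) (pi : 'S_N.+1).

Lemma kvertE (i : 'I_N.+2) (j : 'I_N.+1) :
  kvert delta z pi i j 0 =
  (if unlift ord_max j is Some j' then delta * (z j')%:~R else 0) +
  \sum_(k < N.+1 | (k < i)%N) (if j == ord_max then 1 else delta) * (j == pi k)%:R.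
Proof.
rewrite /kvert !mxE summxE; congr (_ + _); apply: eq_bigr => k _.
by rewrite /Pmat /unitv mul_diag_mx !mxE andbT.
Qed.

Lemma partial_sum_mono (x : 'I_N.+1 -> R) (i i' : nat) :
  (forall k, 0 <= x k) -> (i <= i')%N ->
  \sum_(k < N.+1 | (k < i)%N) x k <= \sum_(k < N.+1 | (k < i')%N) x k.
Proof.
move=> x_ge0 le_ii'; rewrite [X in X <= _]big_mkcond [X in _ <= X]big_mkcond /=.
apply: ler_sum => k _; case: ifP => ki; case: ifP => ki' //.
by rewrite (leq_trans ki le_ii') in ki'.
Qed.

(* The time coordinate of every vertex lies in [0, 1]: the direction e_(N+1)
   is used exactly once along the permutation pi. *)
Lemma tim_kvert_bounds (i : 'I_N.+2) : 0 <= tim (kvert delta z pi i) <= 1.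
Proof.
rewrite /tim kvertE unlift_none add0r eqxx.
have terms_ge0 k : 0 <= 1 * (@ord_max N == pi k)%:R by rewrite mul1r ler0n.
apply/andP; split; first exact: sumr_ge0.
apply: (le_trans (y := \sum_(k < N.+1) 1 * (ord_max == pi k)%:R)).
  rewrite [X in _ <= X](bigID (fun k : 'I_N.+1 => (k < i)%N)) /= lerDl.
  exact: sumr_ge0.
rewrite (reindex_inj (@perm_inj _ pi^-1)) /=.
rewrite (bigD1 ord_max) //= permKV eqxx mul1r big1 ?addr0 // => k k_neq.
by rewrite permKV eq_sym (negbTE k_neq) mulr0.
Qed.

Lemma spat_kvert_mono (i i' : 'I_N.+2) (j : 'I_N) : 0 < delta -> (i <= i')%N ->
  spat (kvert delta z pi i) j 0 <= spat (kvert delta z pi i') j 0.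
Proof.
move=> delta_gt0 le_ii'; rewrite /spat mxE [X in _ <= X]mxE !kvertE lerD2l.
apply: partial_sum_mono => // k; apply: mulr_ge0; last exact: ler0n.
by case: ifP => _; [exact: ler01 | exact: ltW].
Qed.

Lemma fvert_first_le (r : 'I_N.+2) (j : 'I_N.+1) : 0 < delta ->
  vge (spat (fvert delta z pi r j)) (spat (fvert delta z pi r ord0)).
Proof.
move=> delta_gt0 i; apply: spat_kvert_mono => //=.
rewrite /bump; case r_le0: (r <= 0)%N => //.
by rewrite (leq_trans r_le0 (leq0n j)).
Qed.

End Triangulation.

Section FarField.
Variables (R : rcfType) (N : nat) (G : 'cV[R]_N -> 'cV[R]_N) (k0 kG kh : R).

(* Far from the origin the damping factor of phi is nonpositive and the
   additive term vanishes, so phi is nonpositive wherever G is nonnegative. *)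
Lemma phi_far_nonpos (v : 'cV[R]_N) : 0 < k0 -> kh <= kG ->
  kG + k0 <= enorm v -> nonneg (G v) -> forall i, phi G k0 kG kh v i 0 <= 0.
Proof.
move=> k0_gt0 kh_le_kG far Gv_ge0 i; set n := enorm v in far *.
have n_ge0 : 0 <= n by exact: sqrtr_ge0.
set q := (kG - 2 * n) / (n + k0).
have q_le : q <= -1 by rewrite ler_pdivrMr; lra.
have damping_le0 : 1 + Num.min 0 q <= 0.
  have min_le : Num.min 0 q <= q by rewrite ge_min lexx orbT.
  lra.
have shift_eq0 : Num.max 0 (kh - 2 * n) = 0 by rewrite max_l //; lra.
rewrite /phi !mxE -/n shift_eq0 mul0r addr0.
exact: mulr_le0_ge0.
Qed.

Lemma label_far_le (c v : 'cV[R]_N) (t : R) : 0 < k0 -> kh <= kG ->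
  kG + k0 <= enorm v -> nonneg (G v) -> nonneg c -> 0 <= t <= 1 ->
  forall i, label G k0 kG kh c v t i 0 <= c i 0 - v i 0.
Proof.
move=> k0_gt0 kh_le_kG far Gv_ge0 c_ge0 /andP[t_ge0 t_le1] i.
have phi_le0 := phi_far_nonpos k0_gt0 kh_le_kG far Gv_ge0 i.
have c_i_ge0 := c_ge0 i.
have -> : label G k0 kG kh c v t i 0 =
          (1 - t) * c i 0 + t * phi G k0 kG kh v i 0 - v i 0.
  by rewrite /label /vartheta !mxE.
rewrite lerD2r; nra.
Qed.

End FarField.

Definition dotc (R : rcfType) (N : nat) (a b : 'cV[R]_N) : R :=
  \sum_i a i 0 * b i 0.

Lemma dotcc (R : rcfType) (N : nat) (a : 'cV[R]_N) : dotc a a = enorm a ^+ 2.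
Proof.
rewrite /enorm sqr_sqrtr; last by apply: sumr_ge0 => i _; exact: sqr_ge0.
by apply: eq_bigr => i _; rewrite expr2.
Qed.

(* A vector twice as long as c has a larger square than its product with c;
   this follows from a_i c_i <= c_i^2 + a_i^2 / 4. *)
Lemma dotc_lt_sq (R : rcfType) (N : nat) (a c : 'cV[R]_N) :
  2 * enorm c < enorm a -> dotc a c < dotc a a.
Proof.
move=> long_a.
have amgm : dotc a c <= enorm c ^+ 2 + enorm a ^+ 2 / 4.
  rewrite -!dotcc /dotc mulr_suml -big_split /=.
  by apply: ler_sum => i _; have := sqr_ge0 (a i 0 / 2 - c i 0); nra.
have c_ge0 : 0 <= enorm c by exact: sqrtr_ge0.
rewrite dotcc; nra.
Qed.

Lemma dotc_label_neg (R : rcfType) (N : nat) (a c v l : 'cV[R]_N) :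
  nonneg a -> vge v a -> 2 * enorm c < enorm a ->
  (forall i, l i 0 <= c i 0 - v i 0) -> dotc a l < 0.
Proof.
move=> a_ge0 a_le_v long_a l_le.
apply: (le_lt_trans (y := dotc a c - dotc a a)); last first.
  by have := dotc_lt_sq long_a; lra.
rewrite /dotc -sumrB; apply: ler_sum => i _; rewrite -mulrBr.
apply: ler_wpM2l; first exact: a_ge0.
by have := l_le i; have := a_le_v i; lra.
Qed.

Lemma lexpos_first_col_ge0 (R : rcfType) (m n : nat) (W : 'M[R]_(m, n.+1)) :
  lexpos W -> forall i, 0 <= W i 0.
Proof.
move=> W_lexpos i; have [k [Wik_gt0 Wi_before]] := W_lexpos i.
case: (posnP k) => [k_eq0 | k_gt0]; last by rewrite Wi_before.
by rewrite (_ : 0 = k) ?ltW //; exact: val_inj.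
Qed.

(* Completeness yields a convex combination of the labels equal to zero:
   the first column of W, read through the first row (all ones) and the
   remaining rows (the labels) of L(tau) W = I. *)
Lemma complete_convex_zero (R : rcfType) (N : nat) (G : 'cV[R]_N -> 'cV[R]_N)
    (k0 kG kh : R) (c : 'cV[R]_N) (y : 'I_N.+1 -> 'cV[R]_N.+1) :
  complete G k0 kG kh c y ->
  exists w : 'I_N.+1 -> R,
    [/\ forall j, 0 <= w j, \sum_j w j = 1 &
        forall i, \sum_j w j * label G k0 kG kh c (spat (y j)) (tim (y j)) i 0 = 0].
Proof.
move=> [W [LW_eq1 W_lexpos]]; exists (fun j => W j 0); split.
- exact: lexpos_first_col_ge0.
- have := congr1 (fun M : 'M[R]_N.+1 => M 0 0) LW_eq1; rewrite /= !mxE eqxx.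
  move=> row0; apply: eq_trans row0; apply: esym; apply: eq_bigr => j _; rewrite mxE.
  rewrite (_ : (0 : 'I_N.+1) = lshift N (0 : 'I_1)); last exact: val_inj.
  by rewrite col_mxEu mxE mul1r.
- move=> i; have := congr1 (fun M : 'M[R]_N.+1 => M (rshift 1 i) 0) LW_eq1.
  rewrite /= !mxE => row_i; apply: eq_trans row_i; apply: esym.
  by apply: eq_bigr => j _; rewrite mxE col_mxEd mulrC.
Qed.

Lemma convex_comb_ne0 (R : rcfType) (n N : nat) (x : 'I_n -> 'cV[R]_N)
    (a : 'cV[R]_N) (w : 'I_n -> R) :
  (forall j, 0 <= w j) -> \sum_j w j = 1 -> (forall j, dotc a (x j) < 0) ->
  ~ (forall i, \sum_j w j * x j i 0 = 0).
Proof.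
move=> w_ge0 w_sum1 ax_lt0 comb_eq0.
have terms_eq0 : \sum_j (- (w j * dotc a (x j))) = 0.
  rewrite sumrN /dotc; under eq_bigr do rewrite mulr_sumr.
  rewrite exchange_big /= big1 ?oppr0 // => i _.
  transitivity (a i 0 * \sum_j w j * x j i 0); last by rewrite comb_eq0 mulr0.
  by rewrite mulr_sumr; apply: eq_bigr => j _; rewrite mulrCA.
have terms_ge0 j : 0 <= - (w j * dotc a (x j)).
  by rewrite oppr_ge0 mulr_ge0_le0 // ltW.
have w_eq0 j : w j = 0.
  move/eqP: (psumr_eq0P (fun j _ => terms_ge0 j) terms_eq0 (i := j) isT).
  by rewrite oppr_eq0 mulf_eq0 (lt_eqF (ax_lt0 j)) orbF => /eqP.
by move: w_sum1; rewrite big1 // => /esym/eqP; rewrite oner_eq0.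
Qed.

Theorem mainTheorem3 (R : rcfType) (N : nat) (G : 'cV[R]_N -> 'cV[R]_N)
  (k0 kG kh delta : R) (c : 'cV[R]_N) (z : 'I_N -> int) (pi : 'S_N.+1)
  (r : 'I_N.+2) :
  monotone_on_nonneg G ->
  0 < k0 -> 0 < kh -> kh < kG -> 0 < delta ->
  nonneg c -> enorm c < kG / 2 ->
  (forall j, nonneg (spat (fvert delta z pi r j))) ->
  (forall j, kG + k0 + delta < enorm (spat (fvert delta z pi r j))) ->
  ~ complete G k0 kG kh c (fvert delta z pi r).
Proof.
move=> [G_nonneg _] k0_gt0 _ kh_lt_kG delta_gt0 c_ge0 c_small v_ge0 v_far.
move=> /complete_convex_zero [w [w_ge0 w_sum1 comb_eq0]].
pose a := spat (fvert delta z pi r ord0).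
have long_a : 2 * enorm c < enorm a by have := v_far ord0; lra.
apply: (convex_comb_ne0 (a := a) w_ge0 w_sum1 _ comb_eq0) => j.
have a_le_v := @fvert_first_le R N delta z pi r j delta_gt0.
apply: dotc_label_neg (v_ge0 ord0) a_le_v long_a _.
have far_j : kG + k0 <= enorm (spat (fvert delta z pi r j)).
  by have := v_far j; lra.
exact: label_far_le k0_gt0 (ltW kh_lt_kG) far_j (G_nonneg _ (v_ge0 j)) c_ge0
  (tim_kvert_bounds _ _ _ _).
Qed.
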